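(* Let $m \equiv 1 \pmod 4$ with $m > 1$, $n = 3^m - 1$, $v = (3^{(m-1)/2}+1)/2$ and $\delta = (3^{(m-1)/2}+13)/2$. Then $\gcd(v,n) = 1$, and, setting $T_{(1,2,m)}(v) = \{ vi \bmod n : i \in T_{(1,2,m)}\}$, we have $\{1, 2, \ldots, \delta-1\} \subseteq T_{(1,2,m)}(v)$.
   Context: For an integer $0 \le j \le n-1$ with $3$-adic expansion $j = \sum_{t=0}^{m-1} j_t 3^t$, $j_t \in \{0,1,2\}$, let $w_3(j) = \sum_{t=0}^{m-1} j_t$. For distinct $i_1,i_2 \in \{0,1,2,3\}$, $T_{(i_1,i_2,m)} = \{1 \le j \le n-1 : w_3(j) \equiv i_1 \text{ or } i_2 \pmod 4\}$. For an integer $b$, $b \bmod n$ is the unique $b_0 \in \{0,\ldots,n-1\}$ with $b \equiv b_0 \pmod n$. *)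

From mathcomp Require Import all_boot.
Set Implicit Arguments. Unset Strict Implicit. Unset Printing Implicit Defensive.

(* Sum of the base-3 digits of j, using the m-digit 3-adic expansion
   j = \sum_{t<m} j_t 3^t (valid for 0 <= j <= 3^m - 1). *)
Definition w3 (m j : nat) : nat := \sum_(t < m) ((j %/ 3 ^ t) %% 3).

Definition T (i1 i2 m : nat) (j : nat) : bool :=
  [&& 1 <= j, j <= (3 ^ m - 1) - 1 &
      ((w3 m j %% 4 == i1) || (w3 m j %% 4 == i2))].

Definition Tv (i1 i2 m v : nat) (k : nat) : Prop :=
  exists i, T i1 i2 m i /\ k = (v * i) %% (3 ^ m - 1).

From mathcomp Require Import all_boot zify.

Set Implicit Arguments.
Unset Strict Implicit.

(* Write m = 4s + 1, H = 3^(2s), so that n = 3H^2 - 1 and 2v = H + 1 with v odd;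
   then n = (6H - 6)v + 2 gives gcd(v, n) = gcd(v, 2) = 1.  The key identity is
   v * 3(H - 1)(2a) = a(n - 2), i.e. v * 3(H - 1)x = -x (mod n) for even x.
   For 0 < x <= H the base-3 expansion of (H - 1)x is the block H - x followed by
   the block x - 1, whose digit sums add up to exactly 2 * 2s.  Hence
   1 + 3(H - 1)(2a) has weight 4s + 1 and is sent to v - 2a, n - 3(H - 1)(2j) has
   weight 2m - 4s = 4s + 2 and is sent to 2j, and n - (3(H - 1)(2j) - 1) has
   weight 4s + 1 (when 3 does not divide j, so that subtracting 1 borrows nothing)
   and is sent to v + 2j.  Together with 2 |-> 2v this covers 1, ..., v + 5. *)

Lemma w3S p x : w3 p.+1 x = x %% 3 + w3 p (x %/ 3).
Proof.
rewrite /w3 big_ord_recl expn0 divn1; congr (_ + _).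
by apply: eq_bigr => t _; rewrite expnS divnMA.
Qed.

Lemma w3_0 p : w3 p 0 = 0.
Proof. by rewrite /w3 big1 // => t _; rewrite div0n mod0n. Qed.

Lemma w3_le p x : w3 p x <= 2 * p.
Proof.
elim: p x => [|p IHp] x; first by rewrite /w3 big_ord0.
by rewrite w3S; have := IHp (x %/ 3); have := ltn_pmod x (isT : 0 < 3); lia.
Qed.

Lemma w3_digitS p c x : c < 3 -> w3 p.+1 (c + 3 * x) = c + w3 p x.
Proof. by move=> c_lt3; rewrite w3S; congr (_ + w3 p _); lia. Qed.

Lemma w3_cat p q a b : a < 3 ^ p -> w3 (p + q) (a + 3 ^ p * b) = w3 p a + w3 q b.
Proof.
elim: p a => [|p IHp] a.
  rewrite expn0 mul1n => a_lt1; have -> : a = 0 by lia.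
  by rewrite w3_0.
rewrite expnS => a_lt; rewrite addSn !w3S -addnA -IHp; last by lia.
by congr (_ + w3 _ _); lia.
Qed.

Lemma w3_compl p a : a < 3 ^ p -> w3 p (3 ^ p - 1 - a) = 2 * p - w3 p a.
Proof.
elim: p a => [|p IHp] a; first by rewrite /w3 !big_ord0.
rewrite expnS => a_lt; rewrite !w3S.
have -> : (3 * 3 ^ p - 1 - a) %/ 3 = 3 ^ p - 1 - a %/ 3 by lia.
rewrite IHp; last by lia.
by have := w3_le p (a %/ 3); have := ltn_pmod a (isT : 0 < 3); lia.
Qed.

Lemma w3_mul_subn1 p x : 0 < x <= 3 ^ p -> w3 (p + p) ((3 ^ p - 1) * x) = 2 * p.
Proof.
move=> x_bounds.
have -> : (3 ^ p - 1) * x = (3 ^ p - 1 - x.-1) + 3 ^ p * x.-1 by nia.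
rewrite w3_cat ?w3_compl; try lia.
by have := w3_le p x.-1; lia.
Qed.

Lemma w3_pred p x : 0 < p -> x %% 3 != 0 -> w3 p x.-1 = (w3 p x).-1.
Proof.
case: p => // p _ x_mod; rewrite !w3S.
have -> : x.-1 %/ 3 = x %/ 3 by lia.
lia.
Qed.

Lemma modn_mul_subn v y r q n : v * y + r = q * n -> y <= n -> r < n ->
  v * (n - y) %% n = r.
Proof.
move=> def_q y_le r_lt; have q_le : q <= v by nia.
have -> : v * (n - y) = (v - q) * n + r by nia.
by rewrite modnMDl modn_small.
Qed.

Lemma TvP i1 i2 m v i : 0 < i < 3 ^ m - 1 ->
  (w3 m i %% 4 == i1) || (w3 m i %% 4 == i2) -> Tv i1 i2 m v (v * i %% (3 ^ m - 1)).
Proof. by move=> /andP[i_gt0 i_lt] w_mod; exists i; split; rewrite // /T w_mod i_gt0; lia. Qed.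

Section Witnesses.

Variable s : nat.
Hypothesis s_gt0 : 0 < s.

Local Notation H := (3 ^ (2 * s)).
Local Notation m := (4 * s).+1.
Local Notation n := (3 ^ m - 1).
Local Notation v := ((H + 1) %/ 2).

Lemma H_mod4 : H %% 4 = 1.
Proof. by rewrite expnM -modnXm exp1n. Qed.

Lemma H_mod3 : H %% 3 = 0.
Proof. by apply/eqP; rewrite -/(3 %| H) dvdn_exp //; lia. Qed.

Lemma H_ge9 : 9 <= H.
Proof. by rewrite (_ : 9 = 3 ^ 2) // leq_pexp2l //; lia. Qed.

Lemma exp_m : 3 ^ m = 3 * H * H.
Proof. by rewrite expnS -mulnA -expnD; congr (_ * 3 ^ _); lia. Qed.

Lemma double_v : 2 * v = H + 1.
Proof. by have := H_mod4; lia. Qed.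

Lemma coprime_v_n : coprime v n.
Proof.
have -> : n = (6 * H - 6) * v + 2 by have := exp_m; have := double_v; have := H_ge9; nia.
rewrite /coprime gcdnMDl -/(coprime v 2) coprimen2.
have : v %% 2 = 1 by have := H_mod4; lia.
by rewrite modn2; case: odd.
Qed.

Lemma v_addn_H_lt_n : v + H < n.
Proof. by have := exp_m; have := double_v; have := H_ge9; nia. Qed.

Lemma v_mul_stair a : v * (3 * ((H - 1) * (2 * a))) + 2 * a = a * n.
Proof. by have := exp_m; have := double_v; have := H_ge9; nia. Qed.

Lemma w3_stair x : 0 < x <= H -> w3 (4 * s) ((H - 1) * x) = 4 * s.
Proof.
move=> x_bounds; have -> : 4 * s = 2 * s + 2 * s by lia.
by rewrite w3_mul_subn1 //; lia.
Qed.

Lemma Tv_subn_double a : 2 * a < v -> Tv 1 2 m v (v - 2 * a).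
Proof.
move=> a_lt; set z := (H - 1) * (2 * a).
have z_le : z <= (H - 1) * H by rewrite leq_mul2l; have := double_v; lia.
have z_lt : 3 * z < n - 1 by have := exp_m; have := H_ge9; nia.
have -> : v - 2 * a = v * (1 + 3 * z) %% n.
  have def_a := v_mul_stair a.
  rewrite (_ : v * (1 + 3 * z) = a * n + (v - 2 * a)); last by rewrite -/z in def_a; lia.
  by rewrite modnMDl modn_small; have := v_addn_H_lt_n; lia.
apply: TvP; first by lia.
have w_z : w3 (4 * s) z %% 4 = 0.
  have [a0|a_gt0] := posnP a; first by rewrite /z a0 !muln0 w3_0.
  by rewrite w3_stair; lia.
by rewrite w3_digitS //; lia.
Qed.

Lemma Tv_addn_double j : 0 < j -> ~~ (3 %| j) -> 2 * j <= H -> Tv 1 2 m v (v + 2 * j).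
Proof.
move=> j_gt0 j_ndvd j_le; set z := (H - 1) * (2 * j).
have z_gt0 : 0 < z by rewrite muln_gt0; have := H_ge9; lia.
have z_le : z <= (H - 1) * H by rewrite leq_mul2l; lia.
have z_lt : 3 * z < n by have := exp_m; have := H_ge9; nia.
have z_mod3 : z %% 3 != 0.
  rewrite /z -modnMml (_ : (H - 1) %% 3 = 2); last by have := H_mod3; lia.
  by move: j_ndvd; rewrite /dvdn; lia.
have -> : v + 2 * j = v * (n - (3 * z).-1) %% n.
  have def_j : v * (3 * z).-1 + (v + 2 * j) = j * n.
    by rewrite -(v_mul_stair j) -/z; nia.
  by apply/esym; apply: (modn_mul_subn def_j); have := v_addn_H_lt_n; lia.
apply: TvP; first by lia.
have -> : (3 * z).-1 = 2 + 3 * z.-1 by lia.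
rewrite w3_compl; last by lia.
rewrite w3_digitS // w3_pred ?w3_stair //; lia.
Qed.

Lemma Tv_double j : 0 < j -> 2 * j <= H -> Tv 1 2 m v (2 * j).
Proof.
move=> j_gt0 j_le; set z := (H - 1) * (2 * j).
have z_gt0 : 0 < z by rewrite muln_gt0; have := H_ge9; lia.
have z_le : z <= (H - 1) * H by rewrite leq_mul2l; lia.
have z_lt : 3 * z < n by have := exp_m; have := H_ge9; nia.
have -> : 2 * j = v * (n - 3 * z) %% n.
  by apply/esym; apply: (modn_mul_subn (v_mul_stair j)); have := v_addn_H_lt_n; lia.
apply: TvP; first by lia.
rewrite w3_compl; last by lia.
rewrite -[3 * z]add0n w3_digitS // w3_stair; lia.
Qed.

Lemma Tv_double_v : Tv 1 2 m v (2 * v).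
Proof.
have two_v_lt : 2 * v < n by have := v_addn_H_lt_n; have := double_v; lia.
rewrite -(modn_small two_v_lt) (mulnC 2 v); apply: TvP; first by lia.
by rewrite -[2]addn0 -(muln0 3) w3_digitS // w3_0.
Qed.

Lemma Tv_interval k : 0 < k <= v + 5 -> Tv 1 2 m v k.
Proof.
move=> /andP[k_gt0 k_le].
have two_v := double_v; have H_ge9' := H_ge9; have H_mod4' := H_mod4.
have [k_odd|k_even] : k %% 2 = 1 \/ k %% 2 = 0 by lia.
- have [k_le_v|v_lt_k] := leqP k v.
    by rewrite (_ : k = v - 2 * ((v - k) %/ 2)); [apply: Tv_subn_double|]; lia.
  by rewrite (_ : k = v + 2 * ((k - v) %/ 2)); [apply: Tv_addn_double|]; lia.
have [k_le_H|H_lt_k] := leqP k H.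
  by rewrite (_ : k = 2 * (k %/ 2)); [apply: Tv_double|]; lia.
by rewrite (_ : k = 2 * v); [apply: Tv_double_v|]; lia.
Qed.

End Witnesses.

Theorem lemma3 (m : nat) (hm4 : m %% 4 = 1) (hm1 : 1 < m) :
  let n := 3 ^ m - 1 in
  let v := (3 ^ ((m - 1) %/ 2) + 1) %/ 2 in
  let delta := (3 ^ ((m - 1) %/ 2) + 13) %/ 2 in
  coprime v n /\ (forall k, 1 <= k <= delta - 1 -> Tv 1 2 m v k).
Proof.
have [s -> s_gt0] : exists2 s, m = (4 * s).+1 & 0 < s by exists (m %/ 4); lia.
rewrite (_ : ((4 * s).+1 - 1) %/ 2 = 2 * s); last by lia.
move=> n v delta; split; first exact: coprime_v_n.
move=> k /andP[k_gt0 k_le]; apply: Tv_interval => //.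
by rewrite k_gt0 /=; move: k_le; rewrite /delta; lia.
Qed.
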